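(* Let $\rho$ be a two-qubit state on $\mathbb{C}^2\otimes\mathbb{C}^2$ whose correlation matrix $T$ is diagonal, and write $\lambda_i=T_{ii}$ for $i=0,1,2$. Then $$d_{\max}(\rho)=\frac{1}{\sqrt2}\sqrt{\sum_{i=0}^{2}\lambda_i^2(1-n_i^2)},$$ where $\vec n=(n_0,n_1,n_2)^T$ is the unit vector defined as follows: if $\rho_B\neq I/2$, then $\vec n=\vec r^B/\|\vec r^B\|$; if $\rho_B=I/2$, then $n_i=1$ (and $n_j=0$ for $j\neq i$) for an index $i$ with $|\lambda_i|=\min_k|\lambda_k|$.
   Context: Let $\sigma_0,\sigma_1,\sigma_2$ be the Pauli matrices $X,Y,Z$. Every two-qubit state can be written as $\rho=\frac14\big(I\otimes I+\sum_i r^A_i\sigma_i\otimes I+\sum_j r^B_j I\otimes\sigma_j+\sum_{i,j}T_{ij}\sigma_i\otimes\sigma_j\big)$, with Bloch vectors $r^A_i=\mathrm{Tr}(\sigma_i\rho_A)$, $r^B_j=\mathrm{Tr}(\sigma_j\rho_B)$ (where $\rho_A=\mathrm{Tr}_B\rho$, $\rho_B=\mathrm{Tr}_A\rho$) and real correlation matrix $T_{ij}=\mathrm{Tr}((\sigma_i\otimes\sigma_j)\rho)$. A unitary $U^B$ on $\mathbb{C}^2$ is called cyclic for $\rho$ if $[\rho_B,U^B]=0$. Set $\rho_f=(I\otimes U^B)\rho(I\otimes U^{B\dagger})$, define the Fu distance $d(\rho,U^B)=\frac{1}{\sqrt2}\|\rho-\rho_f\|_F$ (Frobenius norm), and $d_{\max}(\rho)=\max\{d(\rho,U^B):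 U^B\text{ unitary},\ [\rho_B,U^B]=0\}$. *)

From HB Require Import structures.
From mathcomp Require Import all_boot all_order all_algebra.
From mathcomp Require Import spectral.
From mathcomp Require Import complex mxtens.
From mathcomp Require Import reals.
Set Implicit Arguments. Unset Strict Implicit. Unset Printing Implicit Defensive.
Import Order.TTheory GRing.Theory Num.Theory.
Local Open Scope ring_scope.
Local Open Scope sesquilinear_scope.

Section TwoQubit.
Variable R : rcfType.
Local Notation C := (R[i]).

(* Pauli matrices sigma_0 = X, sigma_1 = Y, sigma_2 = Z *)
Definition pauli (k : 'I_3) : 'M[C]_2 :=
  \matrix_(a < 2, b < 2)
    match nat_of_ord k with
    | 0 => if a != b then 1 else 0
    | 1 => if a == b then 0 else if nat_of_ord a == 0%N then - 'i%C else 'i%C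
    | _ => if a == b then (if nat_of_ord a == 0%N then 1 else -1) else 0
    end.

Definition is_state (rho : 'M[C]_(2 * 2)) : Prop :=
  [/\ rho ^t* = rho,
      forall v : 'cV[C]_(2 * 2), 0 <= (v ^t* *m rho *m v) 0 0
    & \tr rho = 1].

(* partial traces; basis index of |a>|b> is mxtens_index (a, b) *)
Definition ptraceB (rho : 'M[C]_(2 * 2)) : 'M[C]_2 :=  (* rho_A = Tr_B rho *)
  \matrix_(a < 2, a' < 2) \sum_(b < 2) rho (mxtens_index (a, b)) (mxtens_index (a', b)).
Definition ptraceA (rho : 'M[C]_(2 * 2)) : 'M[C]_2 :=  (* rho_B = Tr_A rho *)
  \matrix_(b < 2, b' < 2) \sum_(a < 2) rho (mxtens_index (a, b)) (mxtens_index (a, b')).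

Definition blochB (rho : 'M[C]_(2 * 2)) (j : 'I_3) : R :=
  complex.Re (\tr (pauli j *m ptraceA rho)).

Definition corr (rho : 'M[C]_(2 * 2)) (i j : 'I_3) : R :=
  complex.Re (\tr ((pauli i *t pauli j) *m rho)).

Definition frob (m n : nat) (A : 'M[C]_(m, n)) : R :=
  Num.sqrt (\sum_(i < m) \sum_(j < n) complex.Re (A i j * (A i j)^*%C)).

Definition rho_f (rho : 'M[C]_(2 * 2)) (U : 'M[C]_2) : 'M[C]_(2 * 2) :=
  ((1%:M : 'M[C]_2) *t U) *m rho *m ((1%:M : 'M[C]_2) *t U) ^t*.

Definition fu_dist (rho : 'M[C]_(2 * 2)) (U : 'M[C]_2) : R :=
  (Num.sqrt 2)^-1 * frob (rho - rho_f rho U).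

Definition cyclic_unitary (rho : 'M[C]_(2 * 2)) (U : 'M[C]_2) : Prop :=
  U \is unitarymx /\ ptraceA rho *m U = U *m ptraceA rho.

Definition is_dmax (rho : 'M[C]_(2 * 2)) (v : R) : Prop :=
  (exists U, cyclic_unitary rho U /\ fu_dist rho U = v) /\
  (forall U, cyclic_unitary rho U -> fu_dist rho U <= v).

Definition dmax_formula (rho : 'M[C]_(2 * 2)) (n : 'I_3 -> R) : R :=
  (Num.sqrt 2)^-1 *
  Num.sqrt (\sum_(i < 3) corr rho i i ^+ 2 * (1 - n i ^+ 2)).

Definition blochB_norm (rho : 'M[C]_(2 * 2)) : R :=
  Num.sqrt (\sum_(j < 3) blochB rho j ^+ 2).

End TwoQubit.

From HB Require Import structures.
From mathcomp Require Import all_boot all_order all_algebra.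
From mathcomp Require Import spectral.
From mathcomp Require Import complex mxtens.
From mathcomp Require Import reals.
From mathcomp Require Import ring lra.
Import Order.TTheory GRing.Theory Num.Theory.
Local Open Scope ring_scope.

Set Implicit Arguments. Unset Strict Implicit. Unset Printing Implicit Defensive.
Local Open Scope sesquilinear_scope.

(* The distance is computed block by block. Writing [rho] as a 2x2 block matrix
   of operators on B, each block of [rho - rho_f] is [X - U X U^*] for the
   corresponding block [X] of [rho], and expanding [X] in the Pauli basis shows
   [4 ||rho - rho_f||^2 = sum_k lambda_k^2 (sum_j |u_j|^2 - |u_k|^2)], where
   [u_k = tr (sigma_k U)]: the diagonal correlation matrix decouples the three
   Pauli directions, and cyclicity makes the two diagonal blocks cancel.
   Unitarity gives [sum_j |u_j|^2 <= 4], and [U] commutes with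
   [rho_B = (1 + r.sigma)/2] iff [u] is parallel to [r]. If [r <> 0] the
   weights [|u_k|^2] are therefore proportional to [r_k^2], and the maximum is
   attained by [U = n.sigma]; if [r = 0] the weights are unconstrained and the
   maximum puts all of them on a direction [i0] with [|lambda_i0|] minimal,
   which [U = sigma_i0] achieves. *)

Definition b0 : 'I_2 := @Ordinal 2 0 isT.
Definition b1 : 'I_2 := @Ordinal 2 1 isT.
Definition pX : 'I_3 := @Ordinal 3 0 isT.
Definition pY : 'I_3 := @Ordinal 3 1 isT.
Definition pZ : 'I_3 := @Ordinal 3 2 isT.

Lemma big_ord2 (V : nmodType) (F : 'I_2 -> V) : \sum_(i < 2) F i = F b0 + F b1.
Proof. by rewrite !big_ord_recr /= big_ord0 add0r; congr (F _ + F _); apply: val_inj. Qed.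

Lemma big_ord3 (V : nmodType) (F : 'I_3 -> V) : \sum_(i < 3) F i = F pX + F pY + F pZ.
Proof. by rewrite !big_ord_recr /= big_ord0 add0r; congr (F _ + F _ + F _); apply: val_inj. Qed.

Lemma ord2P (i : 'I_2) : i = b0 \/ i = b1.
Proof. by case: i => [[|[|m]] Hm]; [left|right|]; try apply: val_inj. Qed.

Lemma ord3P (i : 'I_3) : [\/ i = pX, i = pY | i = pZ].
Proof.
by case: i => [[|[|[|m]]] Hm]; [constructor 1|constructor 2|constructor 3|]; try apply: val_inj.
Qed.

Lemma big_mxtens (V : nmodType) m n (F : 'I_(m * n) -> V) :
  \sum_(k < m * n) F k = \sum_(a < m) \sum_(b < n) F (mxtens_index (a, b)).
Proof.
rewrite pair_big (reindex (@mxtens_index m n)) /=; first by apply: eq_bigr => -[].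
by exists (@mxtens_unindex m n) => k _; rewrite (mxtens_indexK, mxtens_unindexK).
Qed.

Section Weights.
Variable R : rcfType.
Implicit Types (l r s : 'I_3 -> R).

Lemma sum_mul_compl l s :
  \sum_(k < 3) l k * (\sum_(j < 3) s j - s k) = \sum_(k < 3) s k * (\sum_(j < 3) l j - l k).
Proof. by rewrite !big_ord3; ring. Qed.

Lemma sqr_le_sum_sqr r k : r k ^+ 2 <= \sum_(j < 3) r j ^+ 2.
Proof.
rewrite big_ord3; have := sqr_ge0 (r pX); have := sqr_ge0 (r pY); have := sqr_ge0 (r pZ).
by case: (ord3P k) => ->; lra.
Qed.

Lemma weights_parallel_le l r s :
  0 < \sum_(j < 3) r j ^+ 2 -> (forall k, 0 <= s k) -> \sum_(j < 3) s j <= 4 ->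
  r pX ^+ 2 * s pY = r pY ^+ 2 * s pX -> r pX ^+ 2 * s pZ = r pZ ^+ 2 * s pX ->
  r pY ^+ 2 * s pZ = r pZ ^+ 2 * s pY ->
  \sum_(k < 3) l k ^+ 2 * (\sum_(j < 3) s j - s k)
    <= 4 * \sum_(k < 3) l k ^+ 2 * (1 - (r k / Num.sqrt (\sum_(j < 3) r j ^+ 2)) ^+ 2).
Proof.
set N := \sum_(j < 3) r j ^+ 2; set S := \sum_(j < 3) s j => N_gt0 s_ge0 S_le4 xy xz yz.
have s_parallel k : s k * N = r k ^+ 2 * S.
  by rewrite /N /S !big_ord3; case: (ord3P k) => ->; nra.
rewrite mulr_sumr; apply: ler_sum => k _.
rewrite expr_div_n (sqr_sqrtr (ltW N_gt0)) [4 * _]mulrCA; apply: ler_wpM2l; first exact: sqr_ge0.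
have t_le1 : r k ^+ 2 / N <= 1 by rewrite ler_pdivrMr // mul1r sqr_le_sum_sqr.
have -> : s k = r k ^+ 2 / N * S by rewrite mulrAC -s_parallel mulfK ?gt_eqF.
have := s_ge0 k; nra.
Qed.

Lemma weights_parallel_eq l r s :
  0 < \sum_(j < 3) r j ^+ 2 -> (forall k, s k = 4 * (r k ^+ 2 / \sum_(j < 3) r j ^+ 2)) ->
  \sum_(k < 3) l k ^+ 2 * (\sum_(j < 3) s j - s k)
    = 4 * \sum_(k < 3) l k ^+ 2 * (1 - (r k / Num.sqrt (\sum_(j < 3) r j ^+ 2)) ^+ 2).
Proof.
set N := \sum_(j < 3) r j ^+ 2 => N_gt0 sE.
have S4 : \sum_(j < 3) s j = 4.
  by under eq_bigr do rewrite sE; rewrite -mulr_sumr -mulr_suml divff ?mulr1 ?gt_eqF.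
rewrite S4 mulr_sumr; apply: eq_bigr => k _.
by rewrite sE expr_div_n (sqr_sqrtr (ltW N_gt0)); ring.
Qed.

Lemma weights_min_le l s i0 :
  (forall k, `|l i0| <= `|l k|) -> (forall k, 0 <= s k) -> \sum_(j < 3) s j <= 4 ->
  \sum_(k < 3) l k ^+ 2 * (\sum_(j < 3) s j - s k)
    <= 4 * \sum_(k < 3) l k ^+ 2 * (1 - (if k == i0 then 1 else 0) ^+ 2).
Proof.
move=> l_min s_ge0 S_le4.
have l2_min k : l i0 ^+ 2 <= l k ^+ 2.
  rewrite -(real_normK (num_real (l i0))) -(real_normK (num_real (l k))).
  by have := l_min k; have := normr_ge0 (l i0); nra.
have -> : \sum_(k < 3) l k ^+ 2 * (1 - (if k == i0 then 1 else 0) ^+ 2)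
    = \sum_(j < 3) l j ^+ 2 - l i0 ^+ 2.
  by rewrite !big_ord3; case: (ord3P i0) => ->; rewrite /= ?eqxx; ring.
rewrite sum_mul_compl (@le_trans _ _ (\sum_(k < 3) s k * (\sum_(j < 3) l j ^+ 2 - l i0 ^+ 2))) //.
  by apply: ler_sum => k _; apply: ler_wpM2l => //; rewrite lerD2l lerN2.
rewrite -mulr_suml ler_wpM2r // subr_ge0; exact: sqr_le_sum_sqr.
Qed.

Lemma weights_min_eq l s i0 : (forall k, s k = if k == i0 then 4 else 0) ->
  \sum_(k < 3) l k ^+ 2 * (\sum_(j < 3) s j - s k)
    = 4 * \sum_(k < 3) l k ^+ 2 * (1 - (if k == i0 then 1 else 0) ^+ 2).
Proof. by move=> sE; rewrite !big_ord3 !sE; case: (ord3P i0) => -> /=; ring. Qed.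

End Weights.

Section TwoQubitAlgebra.
Variable R : rcfType.
Local Notation C := R[i].
Local Notation sigma := (pauli R).

Lemma conjCE (x : C) : x^*%R = x^*%C.
Proof.
case: x => a b; have -> : (a +i* b)%C = (a%:C + 'i * b%:C)%C by simpc.
by rewrite rmorphD rmorphM /= conjCi !conj_Creal ?complex_real //; simpc.
Qed.

Lemma ReD (x y : C) : complex.Re (x + y) = complex.Re x + complex.Re y.
Proof. by case: x; case: y. Qed.

Lemma ReB (x y : C) : complex.Re (x - y) = complex.Re x - complex.Re y.
Proof. by case: x; case: y. Qed.

Lemma Re_sum n (F : 'I_n -> C) : complex.Re (\sum_(i < n) F i) = \sum_(i < n) complex.Re (F i).
Proof. by elim/big_rec2: _ => // i a z _ <-; rewrite ReD. Qed.

Lemma complex_ReE (z : C) : z^*%R = z -> ((complex.Re z)%:C)%C = z.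
Proof. by rewrite conjCE; case: z => a b /= [] hb; congr (_ +i* _)%C; lra. Qed.

Definition abs2 (z : C) : R := complex.Re (z * z^*%C).

Lemma abs2_ge0 (z : C) : 0 <= abs2 z.
Proof. by case: z => a b; rewrite /abs2; simpc; rewrite /=; nra. Qed.

Lemma abs2_realM (k : R) (z : C) : abs2 ((k%:C)%C * z) = k ^+ 2 * abs2 z.
Proof. by case: z => a b; rewrite /abs2; simpc; rewrite /=; ring. Qed.

Lemma abs2_real (x : R) : abs2 ((x%:C)%C) = x ^+ 2.
Proof. by rewrite /abs2; simpc; rewrite /= expr2. Qed.

(* A correlation entry only sees the real parts of these two combinations of a
   Pauli coefficient [t] of an off-diagonal block; they determine [t]. *)
Lemma twice_complexE (t : C) :
  t *+ 2 = ((complex.Re (t^*%R + t))%:C)%C - 'i%C * ((complex.Re (- 'i%C * t^*%R + 'i%C * t))%:C)%C.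
Proof.
rewrite conjCE; case: t => a b; rewrite mulr2n; simpc.
by apply/eqP; rewrite eq_complex /=; apply/andP; split; apply/eqP; ring.
Qed.

Lemma twice_conjE (t : C) :
  t^*%R *+ 2 = ((complex.Re (t^*%R + t))%:C)%C + 'i%C * ((complex.Re (- 'i%C * t^*%R + 'i%C * t))%:C)%C.
Proof.
rewrite conjCE; case: t => a b; rewrite mulr2n; simpc.
by apply/eqP; rewrite eq_complex /=; apply/andP; split; apply/eqP; ring.
Qed.

Lemma adjmxE m n (M : 'M[C]_(m, n)) i j : M ^t* i j = (M j i)^*%R.
Proof. by rewrite !mxE. Qed.

Lemma adjmxM m n p (A : 'M[C]_(m, n)) (B : 'M[C]_(n, p)) : (A *m B) ^t* = B ^t* *m A ^t*.
Proof. by rewrite trmx_mul map_mxM. Qed.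

Lemma adjmxB m n (A B : 'M[C]_(m, n)) : (A - B) ^t* = A ^t* - B ^t*.
Proof. by apply/matrixP => i j; rewrite !mxE rmorphB. Qed.

Lemma pauliE k b b' : sigma k b b' = (sigma k b' b)^*%R.
Proof.
case: (ord3P k) => ->; case: (ord2P b) => ->; case: (ord2P b') => ->;
by rewrite !mxE /= ?conjC0 ?conjC1 ?rmorphN /= ?conjCi ?conjC1 ?opprK.
Qed.

Lemma pauli_adj k : (sigma k) ^t* = sigma k.
Proof. by apply/matrixP => i j; rewrite adjmxE -pauliE. Qed.

Definition pcoef k (X : 'M[C]_2) : C := \tr (sigma k *m X).

Lemma pcoefE k (X : 'M[C]_2) :
  pcoef k X = sigma k b0 b0 * X b0 b0 + sigma k b0 b1 * X b1 b0
            + sigma k b1 b0 * X b0 b1 + sigma k b1 b1 * X b1 b1.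
Proof. by rewrite /pcoef /mxtrace !(big_ord2, mxE); ring. Qed.

Lemma pcoef_entries (X : 'M[C]_2) :
  [/\ pcoef pX X = X b0 b1 + X b1 b0, pcoef pY X = 'i%C * (X b0 b1 - X b1 b0)
    & pcoef pZ X = X b0 b0 - X b1 b1].
Proof. by rewrite !pcoefE !mxE /=; split; ring. Qed.

Lemma pcoefD k (X Y : 'M[C]_2) : pcoef k (X + Y) = pcoef k X + pcoef k Y.
Proof. by rewrite /pcoef mulmxDr mxtraceD. Qed.

Lemma pcoefB k (X Y : 'M[C]_2) : pcoef k (X - Y) = pcoef k X - pcoef k Y.
Proof. by rewrite /pcoef mulmxBr raddfB. Qed.

Lemma pcoefZ k a (X : 'M[C]_2) : pcoef k (a *: X) = a * pcoef k X.
Proof. by rewrite /pcoef -scalemxAr mxtraceZ. Qed.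

Lemma pcoef_adj k (X : 'M[C]_2) : pcoef k (X ^t*) = (pcoef k X)^*%R.
Proof.
have conj_sigma b b' : (sigma k b b')^*%R = sigma k b' b by rewrite [sigma k b' b]pauliE.
by rewrite !pcoefE !adjmxE !rmorphD !rmorphM /= !conj_sigma; ring.
Qed.

Lemma pcoef_real k (X : 'M[C]_2) : X ^t* = X -> ((complex.Re (pcoef k X))%:C)%C = pcoef k X.
Proof. by move=> hX; apply: complex_ReE; rewrite -pcoef_adj hX. Qed.

Lemma pauli_expansion (X : 'M[C]_2) :
  X *+ 2 = \tr X *: 1%:M + \sum_(k < 3) pcoef k X *: sigma k.
Proof.
rewrite big_ord3 !pcoefE; apply/matrixP => i j.
case: (ord2P i) => ->; case: (ord2P j) => ->; rewrite /mxtrace !(mxE, big_ord2) /= ?mulr1n ?mulr0n.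
all: move: (X b0 b0) (X b0 b1) (X b1 b0) (X b1 b1) => [a1 c1] [a2 c2] [a3 c3] [a4 c4].
all: apply/eqP; rewrite eq_complex; simpc; rewrite /=.
all: try done.
all: try (apply/andP; split); apply/eqP; ring.
Qed.

Lemma pcoef_pauli j k : pcoef j (sigma k) = (j == k)%:R *+ 2.
Proof.
case: (ord3P j) => ->; case: (ord3P k) => ->; rewrite pcoefE !mxE /=.
all: apply/eqP; rewrite eq_complex; simpc; rewrite /=.
all: try done.
all: try (apply/andP; split); apply/eqP; ring.
Qed.

Lemma pauli_unitary k : sigma k *m (sigma k) ^t* = 1%:M.
Proof.
rewrite pauli_adj; apply/matrixP => i j.
case: (ord3P k) => ->; case: (ord2P i) => ->; case: (ord2P j) => ->; rewrite !(mxE, big_ord2) /=.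
all: apply/eqP; rewrite eq_complex; simpc; rewrite /=.
all: try done.
all: try (apply/andP; split); apply/eqP; ring.
Qed.

Definition bloch_op (r : 'I_3 -> R) : 'M[C]_2 := \sum_(k < 3) ((r k)%:C)%C *: sigma k.

Lemma pcoef_bloch_op r j : pcoef j (bloch_op r) = ((r j)%:C)%C *+ 2.
Proof.
rewrite /bloch_op big_ord3 !pcoefD !pcoefZ !pcoef_pauli.
by case: (ord3P j) => -> /=; rewrite ?mulr0n ?mulr1n; ring.
Qed.

Lemma scaled_bloch_op_unitary (c : R) r : c ^+ 2 * \sum_(k < 3) r k ^+ 2 = 1 ->
  ((c%:C)%C *: bloch_op r) *m ((c%:C)%C *: bloch_op r) ^t* = 1%:M.
Proof.
rewrite /bloch_op !big_ord3; move: (r pX) (r pY) (r pZ) => a b d H.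
have one_c : (1 : C) = (1 +i* 0)%C by [].
have zero_c : (0 : C) = (0 +i* 0)%C by [].
apply/matrixP => i j; case: (ord2P i) => ->; case: (ord2P j) => ->;
rewrite !(mxE, big_ord2) /= ?mulr1n ?mulr0n !conjCE -?complexr0 ?one_c ?zero_c; simpc.
all: apply/eqP; rewrite eq_complex /=; apply/andP; split; apply/eqP; nra.
Qed.

(* Writing [P] and [U] in the Pauli basis, [U P - P U] is [i/2] times the Pauli
   operator of the cross product of their Pauli coefficient vectors. *)
Lemma pcoef_commute (P U : 'M[C]_2) : U *m P = P *m U ->
  [/\ pcoef pX P * pcoef pY U = pcoef pY P * pcoef pX U,
      pcoef pX P * pcoef pZ U = pcoef pZ P * pcoef pX U
    & pcoef pY P * pcoef pZ U = pcoef pZ P * pcoef pY U].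
Proof.
move=> hUP; have E a b := congr1 (fun M : 'M[C]_2 => M a b) hUP.
have := E b0 b0; have := E b0 b1; have := E b1 b0; rewrite !(mxE, big_ord2) => E10 E01 E00.
have [-> -> ->] := pcoef_entries P; have [-> -> ->] := pcoef_entries U.
split; apply/eqP; rewrite -subr_eq0; apply/eqP.
- transitivity (2 * 'i%C * ((U b0 b0 * P b0 b0 + U b0 b1 * P b1 b0)
    - (P b0 b0 * U b0 b0 + P b0 b1 * U b1 b0))); first by ring.
  by rewrite E00 subrr mulr0.
- transitivity (((U b0 b0 * P b0 b1 + U b0 b1 * P b1 b1) - (P b0 b0 * U b0 b1 + P b0 b1 * U b1 b1))
    - ((U b1 b0 * P b0 b0 + U b1 b1 * P b1 b0) - (P b1 b0 * U b0 b0 + P b1 b1 * U b1 b0)));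
    first by ring.
  by rewrite E01 E10 !subrr ?subr0.
- transitivity ('i%C * (((U b1 b0 * P b0 b0 + U b1 b1 * P b1 b0)
      - (P b1 b0 * U b0 b0 + P b1 b1 * U b1 b0))
    + ((U b0 b0 * P b0 b1 + U b0 b1 * P b1 b1) - (P b0 b0 * U b0 b1 + P b0 b1 * U b1 b1))));
    first by ring.
  by rewrite E01 E10 !subrr addr0 mulr0.
Qed.

Definition frob2 m n (A : 'M[C]_(m, n)) : R := \sum_(i < m) \sum_(j < n) abs2 (A i j).

Lemma frobE m n (A : 'M[C]_(m, n)) : frob A = Num.sqrt (frob2 A).
Proof. by []. Qed.

Lemma frob2_tr n (M : 'M[C]_n) : frob2 M = complex.Re (\tr (M *m M ^t*)).
Proof.
rewrite /frob2 /mxtrace Re_sum; apply: eq_bigr => i _.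
by rewrite !mxE Re_sum; apply: eq_bigr => j _; rewrite !mxE conjCE.
Qed.

Lemma frob2N m n (M : 'M[C]_(m, n)) : frob2 (- M) = frob2 M.
Proof.
apply: eq_bigr => i _; apply: eq_bigr => j _.
by rewrite mxE; case: (M i j) => a b; rewrite /abs2; simpc; rewrite /=; ring.
Qed.

Lemma frob2_realZ m n (c : R) (M : 'M[C]_(m, n)) : frob2 ((c%:C)%C *: M) = c ^+ 2 * frob2 M.
Proof.
rewrite /frob2 mulr_sumr; apply: eq_bigr => i _; rewrite mulr_sumr; apply: eq_bigr => j _.
by rewrite mxE abs2_realM.
Qed.

Lemma frob2Mn2 m n (M : 'M[C]_(m, n)) : frob2 (M *+ 2) = 4 * frob2 M.
Proof.
rewrite /frob2 mulr_sumr; apply: eq_bigr => i _; rewrite mulr_sumr; apply: eq_bigr => j _.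
by rewrite mulr2n mxE; case: (M i j) => a b; rewrite /abs2; simpc; rewrite /=; ring.
Qed.

Lemma frob2_parallelogram m n (X Y : 'M[C]_(m, n)) :
  frob2 (X - 'i%C *: Y) + frob2 (X + 'i%C *: Y) = 2 * frob2 X + 2 * frob2 Y.
Proof.
rewrite /frob2 -big_split !mulr_sumr -big_split; apply: eq_bigr => i _.
rewrite -big_split !mulr_sumr -big_split; apply: eq_bigr => j _.
rewrite !mxE; case: (X i j) => a b; case: (Y i j) => c d; rewrite /abs2; simpc; rewrite /=; ring.
Qed.

(* [block M a a'] is the operator [<a| M |a'>] on the second qubit, so that
   [M = \sum_(a, a') |a><a'| (x) block M a a']. *)
Definition block (M : 'M[C]_(2 * 2)) (a a' : 'I_2) : 'M[C]_2 :=
  \matrix_(b, b') M (mxtens_index (a, b)) (mxtens_index (a', b')).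

Lemma blockB (M N : 'M[C]_(2 * 2)) a a' : block (M - N) a a' = block M a a' - block N a a'.
Proof. by apply/matrixP => b b'; rewrite !mxE. Qed.

Lemma block_adj (M : 'M[C]_(2 * 2)) a a' : block (M ^t*) a a' = (block M a' a) ^t*.
Proof. by apply/matrixP => b b'; rewrite !mxE. Qed.

Lemma frob2_block (M : 'M[C]_(2 * 2)) :
  frob2 M = \sum_(a < 2) \sum_(a' < 2) frob2 (block M a a').
Proof. by rewrite /frob2 big_mxtens !big_ord2 !big_mxtens !big_ord2 !mxE; ring. Qed.

Lemma block_rho_f (rho : 'M[C]_(2 * 2)) U a a' :
  block (rho_f rho U) a a' = U *m block rho a a' *m U ^t*.
Proof.
apply/matrixP => b b'; rewrite /rho_f !mxE !big_mxtens !big_ord2 !mxE !big_ord2 !mxE.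
rewrite !big_mxtens !big_ord2 !mxE !mxtens_indexK /=.
case: (ord2P a) => ->; case: (ord2P a') => -> /=;
  rewrite ?mulr1n ?mulr0n ?rmorphM ?rmorphD ?conjC0 ?conjC1 /=; ring.
Qed.

Lemma ptraceA_block (rho : 'M[C]_(2 * 2)) : ptraceA rho = block rho b0 b0 + block rho b1 b1.
Proof. by apply/matrixP => b b'; rewrite !(mxE, big_ord2). Qed.

Lemma mxtrace_ptraceA (rho : 'M[C]_(2 * 2)) : \tr (ptraceA rho) = \tr rho.
Proof. by rewrite ptraceA_block mxtraceD /mxtrace !(big_mxtens, big_ord2, mxE). Qed.

Lemma ptraceA_adj (rho : 'M[C]_(2 * 2)) : ptraceA (rho ^t*) = (ptraceA rho) ^t*.
Proof. by apply/matrixP => b b'; rewrite !(mxE, big_ord2) rmorphD. Qed.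

Lemma corr_block (rho : 'M[C]_(2 * 2)) i j :
  corr rho i j = complex.Re (sigma i b0 b0 * pcoef j (block rho b0 b0)
    + sigma i b0 b1 * pcoef j (block rho b1 b0) + sigma i b1 b0 * pcoef j (block rho b0 b1)
    + sigma i b1 b1 * pcoef j (block rho b1 b1)).
Proof.
rewrite /corr !pcoefE /mxtrace !(big_mxtens, big_ord2, mxE, mxtens_indexK) /=.
by congr complex.Re; ring.
Qed.

Section HermitianState.
Variable rho : 'M[C]_(2 * 2).
Hypothesis rho_herm : rho ^t* = rho.

Lemma pcoef_block_swap k : pcoef k (block rho b1 b0) = (pcoef k (block rho b0 b1))^*%R.
Proof. by rewrite -pcoef_adj -block_adj rho_herm. Qed.

Lemma pcoef_block_diag_real k a :
  ((complex.Re (pcoef k (block rho a a)))%:C)%C = pcoef k (block rho a a).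
Proof. by apply: pcoef_real; rewrite -block_adj rho_herm. Qed.

Lemma corr_pZ j :
  ((corr rho pZ j)%:C)%C = pcoef j (block rho b0 b0) - pcoef j (block rho b1 b1).
Proof.
rewrite corr_block !mxE /= -[in RHS]pcoef_block_diag_real -[X in _ = _ - X]pcoef_block_diag_real.
by rewrite -rmorphB -ReB; congr (_%:C)%C; congr complex.Re; ring.
Qed.

Lemma pcoef_block01 j :
  pcoef j (block rho b0 b1) *+ 2 = ((corr rho pX j)%:C)%C - 'i%C * ((corr rho pY j)%:C)%C.
Proof.
rewrite twice_complexE !corr_block !mxE /= pcoef_block_swap.
by congr (_%:C - 'i * _%:C)%C; congr complex.Re; ring.
Qed.

Lemma pcoef_block10 j :
  pcoef j (block rho b1 b0) *+ 2 = ((corr rho pX j)%:C)%C + 'i%C * ((corr rho pY j)%:C)%C.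
Proof.
rewrite pcoef_block_swap twice_conjE !corr_block !mxE /= pcoef_block_swap.
by congr (_%:C + 'i * _%:C)%C; congr complex.Re; ring.
Qed.

End HermitianState.

Section LocalUnitary.
Variable U : 'M[C]_2.
Hypothesis U_unitary : U \is unitarymx.

Definition defect (X : 'M[C]_2) : 'M[C]_2 := X - U *m X *m U ^t*.

Lemma unitary_mul_adj : U *m U ^t* = 1%:M.
Proof. exact/unitarymxP. Qed.

Lemma unitary_adj_mul : U ^t* *m U = 1%:M.
Proof. by move: U_unitary; rewrite -trmxC_unitary => /unitarymxP; rewrite trmxCK. Qed.

Lemma defectD (X Y : 'M[C]_2) : defect (X + Y) = defect X + defect Y.
Proof. by rewrite /defect mulmxDr mulmxDl opprD addrACA. Qed.

Lemma defectN (X : 'M[C]_2) : defect (- X) = - defect X.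
Proof. by rewrite /defect mulmxN mulNmx opprK opprB addrC. Qed.

Lemma defectB (X Y : 'M[C]_2) : defect (X - Y) = defect X - defect Y.
Proof. by rewrite defectD defectN. Qed.

Lemma defect_comm (X : 'M[C]_2) : X *m U = U *m X -> defect X = 0.
Proof. by move=> hXU; rewrite /defect -hXU -mulmxA unitary_mul_adj mulmx1 subrr. Qed.

Lemma defect_pauli_expansion (X : 'M[C]_2) :
  defect X *+ 2 = \sum_(k < 3) pcoef k X *: defect (sigma k).
Proof.
have -> : defect X *+ 2 = X *+ 2 - U *m (X *+ 2) *m U ^t*.
  by rewrite /defect mulrnBl !mulr2n mulmxDr mulmxDl.
rewrite pauli_expansion mulmxDr mulmxDl -scalemxAr -scalemxAl mulmx1 unitary_mul_adj.
rewrite mulmx_sumr mulmx_suml opprD addrACA subrr add0r -sumrB.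
by apply: eq_bigr => k _; rewrite /defect scalerBr -scalemxAr -scalemxAl.
Qed.

Lemma unitary_row_norms :
  abs2 (U b0 b0) + abs2 (U b0 b1) = 1 /\ abs2 (U b1 b0) + abs2 (U b1 b1) = 1.
Proof.
have := congr1 (fun M : 'M[C]_2 => M b0 b0) unitary_mul_adj.
have := congr1 (fun M : 'M[C]_2 => M b1 b1) unitary_mul_adj.
by rewrite !(mxE, big_ord2) /= !conjCE /abs2 => h1 h0; split; rewrite -ReD ?h0 ?h1.
Qed.

Lemma frob2_defect_pauli_tr k :
  frob2 (defect (sigma k)) = 4 - 2 * complex.Re (pcoef k (U *m sigma k *m U ^t*)).
Proof.
set W := U *m sigma k *m U ^t*.
have adjW : W ^t* = W by rewrite /W !adjmxM pauli_adj trmxCK mulmxA.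
have trWW : \tr (W *m W) = 2.
  rewrite /W -!mulmxA [U ^t* *m _]mulmxA unitary_adj_mul mul1mx mxtrace_mulC.
  by rewrite -!mulmxA unitary_adj_mul mulmx1 -/(pcoef k _) pcoef_pauli eqxx.
have trWs : \tr (W *m sigma k) = pcoef k W by rewrite mxtrace_mulC.
have trss : \tr (sigma k *m sigma k) = 2 by rewrite -/(pcoef k _) pcoef_pauli eqxx.
rewrite frob2_tr /defect -/W adjmxB pauli_adj adjW mulmxBl !mulmxBr !raddfB /=.
rewrite trWW trWs -/(pcoef k W) trss; case: (pcoef k W) => a b /=; ring.
Qed.

Lemma re_pcoef_pauli_conj k :
  complex.Re (pcoef k (U *m sigma k *m U ^t*)) =
  2 - (\sum_(j < 3) abs2 (pcoef j U) - abs2 (pcoef k U)).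
Proof.
have [h0 h1] := unitary_row_norms.
rewrite big_ord3; move: h0 h1; case: (ord3P k) => ->; have [-> -> ->] := pcoef_entries U;
  rewrite pcoefE /abs2 !(mxE, big_ord2) /= !conjCE.
all: move: (U b0 b0) (U b0 b1) (U b1 b0) (U b1 b1) => [a1 c1] [a2 c2] [a3 c3] [a4 c4].
all: simpc; rewrite /= => h0 h1; nra.
Qed.

Lemma sum_abs2_pcoef_le : \sum_(k < 3) abs2 (pcoef k U) <= 4.
Proof.
have [h0 h1] := unitary_row_norms.
rewrite big_ord3; have [-> -> ->] := pcoef_entries U; move: h0 h1; rewrite /abs2.
move: (U b0 b0) (U b0 b1) (U b1 b0) (U b1 b1) => [a1 c1] [a2 c2] [a3 c3] [a4 c4].
simpc; rewrite /= => h0 h1.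
have := sqr_ge0 (a1 + a4); have := sqr_ge0 (c1 + c4); nra.
Qed.

Lemma frob2_defect_pauli k :
  frob2 (defect (sigma k)) = 2 * (\sum_(j < 3) abs2 (pcoef j U) - abs2 (pcoef k U)).
Proof. by rewrite frob2_defect_pauli_tr re_pcoef_pauli_conj; ring. Qed.

End LocalUnitary.

Lemma block_defect (rho : 'M[C]_(2 * 2)) U a a' :
  block (rho - rho_f rho U) a a' = defect U (block rho a a').
Proof. by rewrite blockB block_rho_f. Qed.

Lemma sum_real_diag (V : lmodType C) (c : 'I_3 -> R) (F : 'I_3 -> V) (i : 'I_3) :
  (forall k : 'I_3, k != i -> c k = 0) -> \sum_(k < 3) ((c k)%:C)%C *: F k = ((c i)%:C)%C *: F i.
Proof.
move=> c0; rewrite (bigD1 i) //= big1 ?addr0 // => k /c0 ->.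
by rewrite rmorph0 scale0r.
Qed.

Lemma sum_real_diag2 (V : lmodType C) (c c' : 'I_3 -> R) (s : C) (F : 'I_3 -> V) (i i' : 'I_3) :
  (forall k : 'I_3, k != i -> c k = 0) -> (forall k : 'I_3, k != i' -> c' k = 0) ->
  \sum_(k < 3) (((c k)%:C)%C + s * ((c' k)%:C)%C) *: F k
    = ((c i)%:C)%C *: F i + s *: (((c' i')%:C)%C *: F i').
Proof.
move=> c0 c'0; under eq_bigr do rewrite scalerDl -scalerA.
by rewrite big_split /= -scaler_sumr (sum_real_diag F c0) (sum_real_diag F c'0).
Qed.

Lemma frob2_quadruple_real m n (X P : 'M[C]_(m, n)) (a p : R) :
  X *+ 2 *+ 2 = ((a%:C)%C) *: P -> frob2 P = p -> 4 * (4 * frob2 X) = a ^+ 2 * p.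
Proof. by move=> hX <-; rewrite -!frob2Mn2 hX frob2_realZ. Qed.

Lemma frob2_quadruple_pair m n (X Y P Q : 'M[C]_(m, n)) (a b p q : R) :
  X *+ 2 *+ 2 = ((a%:C)%C) *: P + - 'i%C *: (((b%:C)%C) *: Q) ->
  Y *+ 2 *+ 2 = ((a%:C)%C) *: P + 'i%C *: (((b%:C)%C) *: Q) ->
  frob2 P = p -> frob2 Q = q ->
  4 * (4 * frob2 X) + 4 * (4 * frob2 Y) = 2 * (a ^+ 2 * p) + 2 * (b ^+ 2 * q).
Proof.
by move=> hX hY <- <-; rewrite -!frob2Mn2 hX hY scaleNr frob2_parallelogram !frob2_realZ.
Qed.

Lemma blocks_weighted_sum (x y z S : R) (l s : 'I_3 -> R) :
  4 * (4 * x) = l pZ ^+ 2 * (2 * (S - s pZ)) ->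
  4 * (4 * y) + 4 * (4 * z) = 2 * (l pX ^+ 2 * (2 * (S - s pX))) + 2 * (l pY ^+ 2 * (2 * (S - s pY))) ->
  4 * (x + y + (z + x)) = \sum_(k < 3) l k ^+ 2 * (S - s k).
Proof. by rewrite big_ord3; lra. Qed.

Section DiagonalCorrelations.
Variables (rho : 'M[C]_(2 * 2)) (U : 'M[C]_2).
Hypothesis rho_herm : rho ^t* = rho.
Hypothesis corr_diag : forall i j : 'I_3, i != j -> corr rho i j = 0.
Hypothesis U_unitary : U \is unitarymx.
Hypothesis U_comm : ptraceA rho *m U = U *m ptraceA rho.

Local Notation d a a' := (defect U (block rho a a')).
Local Notation D k := (defect U (sigma k)).
Local Notation lambda k := ((corr rho k k)%:C)%C.

Let corr_row_diag (i k : 'I_3) : k != i -> corr rho i k = 0.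
Proof. by move=> hk; apply: corr_diag; rewrite eq_sym. Qed.

Lemma defect_block11 : d b1 b1 = - d b0 b0.
Proof.
apply/eqP; rewrite -addr_eq0 addrC -defectD -ptraceA_block.
by rewrite (defect_comm U_unitary U_comm).
Qed.

Lemma defect_block00 : d b0 b0 *+ 2 *+ 2 = lambda pZ *: D pZ.
Proof.
have -> : d b0 b0 *+ 2 = defect U (block rho b0 b0 - block rho b1 b1).
  by rewrite defectB defect_block11 opprK mulr2n.
rewrite defect_pauli_expansion //.
under eq_bigr => k _ do rewrite pcoefB -corr_pZ //.
by rewrite (sum_real_diag (fun k => D k) (@corr_row_diag pZ)).
Qed.

Lemma defect_block_off_diag (s : C) (a a' : 'I_2) :
  (forall k, pcoef k (block rho a a') *+ 2 = ((corr rho pX k)%:C)%C + s * ((corr rho pY k)%:C)%C) ->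
  d a a' *+ 2 *+ 2 = lambda pX *: D pX + s *: (lambda pY *: D pY).
Proof.
move=> hcoef; rewrite defect_pauli_expansion // -sumrMnl.
under eq_bigr do rewrite scalerMnl hcoef.
exact: (sum_real_diag2 s (fun k => D k) (@corr_row_diag pX) (@corr_row_diag pY)).
Qed.

Lemma frob2_rho_f_diag :
  4 * frob2 (rho - rho_f rho U) =
  \sum_(k < 3) corr rho k k ^+ 2 * (\sum_(j < 3) abs2 (pcoef j U) - abs2 (pcoef k U)).
Proof.
have fD := frob2_defect_pauli U_unitary.
have f00 := frob2_quadruple_real defect_block00 (fD pZ).
have h01 k : pcoef k (block rho b0 b1) *+ 2
    = ((corr rho pX k)%:C)%C + - 'i%C * ((corr rho pY k)%:C)%C.
  by rewrite mulNr; exact: pcoef_block01.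
have f0110 := frob2_quadruple_pair (defect_block_off_diag h01)
  (defect_block_off_diag (pcoef_block10 rho_herm)) (fD pX) (fD pY).
rewrite frob2_block !big_ord2 !block_defect defect_block11 frob2N.
exact: (blocks_weighted_sum (l := fun k => corr rho k k) (s := fun k => abs2 (pcoef k U))
  f00 f0110).
Qed.

End DiagonalCorrelations.

Definition disturbance (rho : 'M[C]_(2 * 2)) (U : 'M[C]_2) : R :=
  \sum_(k < 3) corr rho k k ^+ 2 * (\sum_(j < 3) abs2 (pcoef j U) - abs2 (pcoef k U)).

Section DiagonalState.
Variable rho : 'M[C]_(2 * 2).
Hypotheses (rho_herm : rho ^t* = rho) (rho_tr : \tr rho = 1).
Hypothesis corr_diag : forall i j : 'I_3, i != j -> corr rho i j = 0.

Local Notation rhoB := (ptraceA rho).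

Lemma is_dmax_of_disturbance (n : 'I_3 -> R) :
  let bound := 4 * \sum_(k < 3) corr rho k k ^+ 2 * (1 - n k ^+ 2) in
  (exists2 U, cyclic_unitary rho U & disturbance rho U = bound) ->
  (forall U, cyclic_unitary rho U -> disturbance rho U <= bound) ->
  is_dmax rho (dmax_formula rho n).
Proof.
move=> bound [U0 cyc0 eq0] le_bound.
have frob2E U : cyclic_unitary rho U -> 4 * frob2 (rho - rho_f rho U) = disturbance rho U.
  by case=> hU hC; exact: frob2_rho_f_diag.
split.
  exists U0; split => //; rewrite /fu_dist frobE /dmax_formula; congr (_ * Num.sqrt _).
  by apply: (mulfI (_ : 4 != 0)); rewrite ?pnatr_eq0 // frob2E.
move=> U cycU; rewrite /fu_dist frobE; apply: ler_wpM2l; first by rewrite invr_ge0 sqrtr_ge0.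
by apply: ler_wsqrtr; rewrite -(ler_pM2l (_ : 0 < 4)) // frob2E // le_bound.
Qed.

Lemma rhoB_herm : rhoB ^t* = rhoB.
Proof. by rewrite -ptraceA_adj rho_herm. Qed.

Lemma rhoB_tr : \tr rhoB = 1.
Proof. by rewrite mxtrace_ptraceA. Qed.

Lemma pcoef_rhoB k : pcoef k rhoB = ((blochB rho k)%:C)%C.
Proof. by rewrite /blochB -/(pcoef k _) pcoef_real ?rhoB_herm. Qed.

Lemma rhoB_bloch_expansion : rhoB *+ 2 - 1%:M = bloch_op (blochB rho).
Proof.
rewrite pauli_expansion rhoB_tr scale1r addrAC subrr add0r.
by apply: eq_bigr => k _; rewrite pcoef_rhoB.
Qed.

Lemma sum_bloch_sqr_gt0 : rhoB != (2%:R^-1)%:M -> 0 < \sum_(j < 3) blochB rho j ^+ 2.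
Proof.
move=> rhoB_neq; rewrite lt_def sumr_ge0 ?andbT => [|k _]; last exact: sqr_ge0.
apply: contraNneq rhoB_neq => /psumr_eq0P r2_0.
have r0 : bloch_op (blochB rho) = 0.
  apply: big1 => k _; have /eqP := r2_0 (fun j _ => sqr_ge0 (blochB rho j)) k isT.
  by rewrite sqrf_eq0 => /eqP ->; rewrite scale0r.
have rhoB2 : rhoB *+ 2 = 1%:M by apply/eqP; rewrite -subr_eq0 rhoB_bloch_expansion r0.
apply/eqP; have -> : rhoB = 2%:R^-1 *: (rhoB *+ 2).
  by rewrite -(scaler_nat 2 rhoB) scalerA mulVf ?scale1r // pnatr_eq0.
by rewrite rhoB2 scale_scalar_mx mulr1.
Qed.

Lemma dmax_bloch : rhoB != (2%:R^-1)%:M ->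
  is_dmax rho (dmax_formula rho (fun j => blochB rho j / blochB_norm rho)).
Proof.
move=> rhoB_neq; set r := blochB rho; rewrite /blochB_norm -/r.
set N := \sum_(j < 3) r j ^+ 2.
have N_gt0 : 0 < N := sum_bloch_sqr_gt0 rhoB_neq.
apply: is_dmax_of_disturbance => /=.
  set c := (Num.sqrt N)^-1; set U0 := (c%:C)%C *: (rhoB *+ 2 - 1%:M).
  have cN : c ^+ 2 * N = 1 by rewrite /c exprVn sqr_sqrtr ?ltW // mulVf ?gt_eqF.
  exists U0.
    split; first by apply/unitarymxP; rewrite /U0 rhoB_bloch_expansion scaled_bloch_op_unitary.
    rewrite /U0 -scalemxAl -scalemxAr; congr (_ *: _).
    by rewrite mulmxBr mulmxBl mulmx1 mul1mx mulr2n mulmxDr mulmxDl.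
  apply: (@weights_parallel_eq _ _ _ (fun k => abs2 (pcoef k U0))) => // k.
  rewrite /U0 pcoefZ rhoB_bloch_expansion pcoef_bloch_op -rmorphMn -rmorphM abs2_real.
  by rewrite /c exprMn exprVn sqr_sqrtr ?ltW // -/r -/N; field; rewrite gt_eqF.
move=> U [U_unitary U_comm].
have [xy xz yz] := pcoef_commute (esym U_comm); rewrite !pcoef_rhoB in xy xz yz.
have abs2_eq (x y : R) (u v : C) : ((x%:C)%C) * u = ((y%:C)%C) * v -> x ^+ 2 * abs2 u = y ^+ 2 * abs2 v.
  by move=> e; rewrite -!abs2_realM e.
exact: (@weights_parallel_le _ (fun k => corr rho k k) r (fun k => abs2 (pcoef k U)) N_gt0
  (fun k => abs2_ge0 _) (sum_abs2_pcoef_le U_unitary)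
  (abs2_eq _ _ _ _ xy) (abs2_eq _ _ _ _ xz) (abs2_eq _ _ _ _ yz)).
Qed.

Lemma dmax_maximally_mixed : rhoB = (2%:R^-1)%:M ->
  forall i0 : 'I_3, (forall k : 'I_3, `|corr rho i0 i0| <= `|corr rho k k|) ->
  is_dmax rho (dmax_formula rho (fun j => if j == i0 then 1 else 0)).
Proof.
move=> rhoB_mixed i0 corr_min; apply: is_dmax_of_disturbance => /=.
  exists (sigma i0).
    split; first exact/unitarymxP/pauli_unitary.
    by rewrite rhoB_mixed scalar_mxC.
  apply: (@weights_min_eq _ _ (fun k => abs2 (pcoef k (sigma i0)))) => k.
  by rewrite pcoef_pauli; case: (k == i0); rewrite /abs2; simpc; rewrite /=; ring.
move=> U [U_unitary _].
exact: (@weights_min_le _ (fun k => corr rho k k) (fun k => abs2 (pcoef k U)) i0 corr_min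
  (fun k => abs2_ge0 _) (sum_abs2_pcoef_le U_unitary)).
Qed.

End DiagonalState.

End TwoQubitAlgebra.

Theorem lemma3 (R : realType) (rho : 'M[R[i]]_(2 * 2)) :
  is_state rho ->
  (forall i j : 'I_3, i != j -> corr rho i j = 0) ->
  (ptraceA rho != (2%:R^-1)%:M ->
     is_dmax rho (dmax_formula rho (fun j => blochB rho j / blochB_norm rho))) /\
  (ptraceA rho = (2%:R^-1)%:M ->
     forall i0 : 'I_3, (forall k : 'I_3, `|corr rho i0 i0| <= `|corr rho k k|) ->
     is_dmax rho (dmax_formula rho (fun j => if j == i0 then 1 else 0))).
Proof.
move=> [rho_herm _ rho_tr] corr_diag; split.
  exact: dmax_bloch.
exact: dmax_maximally_mixed.
Qed.
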